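(* Let $Q,R\subseteq\mathcal{P}$, and define $\mu=TM(\xi_Q)\cdot TM(\xi_R)$ and $\nu=\gcd\!\left(\dfrac{\xi_Q}{TM(\xi_Q)},\dfrac{\xi_R}{TM(\xi_R)}\right)$. Then $\xi_{Q\cup R}=\mu\cdot\nu$.
   Context: $\mathcal{P}=\{P_1,\ldots,P_n\}$; $\varphi:2^{\mathcal{P}}\to\mathbb{F}_2^n$ sends a set to its indicator vector; for $S\subseteq\mathcal{P}$, $\xi_S(Y_1,\ldots,Y_n)=\prod_{i=1}^n(1+Y_i+\varphi(S)_i)$, i.e. $\xi_S=\prod_{i:P_i\in S}Y_i\cdot\prod_{i:P_i\notin S}(1+Y_i)$. $TM(f)$ is the smallest monomial of $f$ in the lexicographic order with $Y_n\prec\cdots\prec Y_1$. The quotient $\xi_S/TM(\xi_S)$ is the polynomial $\prod_{i:P_i\notin S}(1+Y_i)$; the gcd is taken in $\mathbb{F}_2[Y_1,\ldots,Y_n]$; products and the equality are in the Boolean polynomial ring $\mathbb{F}_2[\bar Y]/\langle Y_i^2-Y_i\rangle$. *)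

From HB Require Import structures.
From mathcomp Require Import all_boot all_order all_algebra.
From mathcomp Require Import mpoly.
Set Implicit Arguments. Unset Strict Implicit. Unset Printing Implicit Defensive.
Import GRing.Theory.
Local Open Scope ring_scope.

(* Boolean polynomials over F_2 in variables Y_1..Y_n, indexed by 'I_n
   (Y_{i+1} is 'X_i, P_{i+1} is the ordinal i). *)
Notation F2 := ('F_2 : fieldType).
Notation BPoly n := {mpoly F2[n]}.

Definition phi n (S : {set 'I_n}) (i : 'I_n) : F2 := (i \in S)%:R.

Definition xi n (S : {set 'I_n}) : BPoly n :=
  \prod_(i < n) (1 + 'X_i + (phi S i)%:MP).

(* strict lexicographic order on monomials with Y_n < ... < Y_1:
   compare the exponents of Y_1, Y_2, ... in that order *)
Definition lexlt n (m1 m2 : 'X_{1..n}) : bool :=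
  [exists i : 'I_n, (m1 i < m2 i)%N &&
     [forall j : 'I_n, (j < i)%N ==> (m1 j == m2 j)]].

Definition lexmin n (m0 : 'X_{1..n}) (s : seq 'X_{1..n}) : 'X_{1..n} :=
  foldr (fun m acc => if lexlt m acc then m else acc) m0 s.

Definition TMmon n (f : BPoly n) : 'X_{1..n} :=
  lexmin (head 0%MM (msupp f)) (msupp f).
Definition TM n (f : BPoly n) : BPoly n := 'X_[TMmon f].

(* f / 'X_[t] : exact division of f by the monomial t (meaningful when
   every monomial of f is divisible by t) *)
Definition mdivmon n (f : BPoly n) (t : 'X_{1..n}) : BPoly n :=
  \sum_(m <- msupp f) f@_m *: 'X_[(m - t)%MM].

Definition mdvd n (a b : BPoly n) : Prop := exists c : BPoly n, b = a * c.
Definition is_gcd n (g a b : BPoly n) : Prop :=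
  [/\ mdvd g a, mdvd g b & forall d, mdvd d a -> mdvd d b -> mdvd d g].

(* equality in the Boolean ring F_2[Y]/<Y_i^2 - Y_i> *)
Definition beq n (p q : BPoly n) : Prop :=
  exists c : 'I_n -> BPoly n, p - q = \sum_(i < n) c i * ('X_i ^+ 2 - 'X_i).

From mathcomp Require Import all_boot all_order all_algebra.
From mathcomp Require Import mpoly.
Set Implicit Arguments.
Unset Strict Implicit.
Unset Printing Implicit Defensive.
Local Open Scope ring_scope.
Import GRing.Theory.

(* Over F_2, xi_S = c_S Y^S with c_S := prod_(i \notin S) (1 + Y_i) ([xi_quot S]).
   Every monomial of c_S other than 1 is nontrivial, so TM(xi_S) = Y^S and the
   quotient is c_S.
   Since c_Q = c_(Q :|: R) * prod_(k in R :\: Q) (1 + Y_k), c_(Q :|: R) divides c_Q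
   and c_R.  A common divisor d of c_Q and c_R divides c_R, which does not involve
   Y_k for k in R; viewed as univariate polynomials in Y_k, a factor of a nonzero
   Y_k-free polynomial is Y_k-free, so d is fixed by the substitution Y_k := 0.
   Applying these substitutions to d e = c_(Q :|: R) prod_k (1 + Y_k) cancels the
   factors 1 + Y_k one by one, so d divides c_(Q :|: R).  As 1 is the only unit of
   F_2[Y], every gcd is c_(Q :|: R), and Y^Q Y^R = Y^(Q :|: R) modulo the Y_i^2 - Y_i. *)

Section MPolyMorphisms.
Variables (n : nat) (R : nzRingType) (S : comNzRingType).

Lemma mpoly_rmorph_ext (f g : {rmorphism {mpoly R[n]} -> S}) :
  (forall c, f c%:MP = g c%:MP) -> (forall i, f 'X_i = g 'X_i) -> f =1 g.
Proof.
move=> eq_fgC eq_fgX p; rewrite (mpolyE p) !rmorph_sum; apply: eq_bigr => m _.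
rewrite -mul_mpolyC !rmorphM eq_fgC mpolyXE_id !rmorph_prod; congr (_ * _).
by apply: eq_bigr => i _; rewrite !rmorphXn eq_fgX.
Qed.

End MPolyMorphisms.

Section VariableElimination.
Variables (n : nat) (R : comNzRingType) (k : 'I_n).
Notation MP := {mpoly R[n]}.

Definition univar : {rmorphism MP -> {poly MP}} :=
  mmap (polyC \o @mpolyC n R)%FUN (fun j => if j == k then 'X else ('X_j)%:P).

Definition msubst0 : {rmorphism MP -> MP} := (horner_eval 0 \o univar)%FUN.

Lemma univarC c : univar c%:MP = (c%:MP)%:P.
Proof. exact: mmapC. Qed.

Lemma univarX j : univar 'X_j = if j == k then 'X else ('X_j)%:P.
Proof. by rewrite /univar /= mmapX mmap1U. Qed.

Lemma msubst0C c : msubst0 c%:MP = c%:MP.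
Proof. by rewrite /msubst0 /= univarC /horner_eval hornerC. Qed.

Lemma msubst0X j : msubst0 'X_j = if j == k then 0 else 'X_j.
Proof. by rewrite /msubst0 /= univarX /horner_eval; case: eqP; rewrite ?hornerX ?hornerC. Qed.

Lemma univarK p : (univar p).['X_k] = p.
Proof.
pose f : {rmorphism MP -> MP} := (horner_eval 'X_k \o univar)%FUN.
have f_id : f =1 idfun.
  apply: mpoly_rmorph_ext => [c|i]; rewrite /= /horner_eval.
    by rewrite univarC hornerC.
  by rewrite univarX; case: eqP => [->|_]; rewrite ?hornerX ?hornerC.
exact: f_id p.
Qed.

Lemma univar_msubst0 p : univar (msubst0 p) = (msubst0 p)%:P.
Proof.
pose f : {rmorphism MP -> {poly MP}} := (univar \o msubst0)%FUN.
pose g : {rmorphism MP -> {poly MP}} := (polyC \o msubst0)%FUN.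
have fg : f =1 g.
  apply: mpoly_rmorph_ext => [c|i].
    change (univar (msubst0 c%:MP) = (msubst0 c%:MP)%:P).
    by rewrite msubst0C univarC.
  change (univar (msubst0 'X_i) = (msubst0 'X_i)%:P).
  by rewrite msubst0X; case: eqP => [_|/eqP ne]; rewrite ?rmorph0 // univarX (negbTE ne).
exact: fg p.
Qed.

Lemma msubst0_prod_1X (r : seq 'I_n) (P : pred 'I_n) :
  {in r, forall j, P j -> j != k} ->
  msubst0 (\prod_(j <- r | P j) (1 + 'X_j)) = \prod_(j <- r | P j) (1 + 'X_j).
Proof.
move=> r_k; rewrite rmorph_prod big_seq_cond [RHS]big_seq_cond.
apply: eq_bigr => j /andP[jr Pj].
by rewrite rmorphD rmorph1 msubst0X (negbTE (r_k j jr Pj)).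
Qed.

Lemma msubst0_1X : msubst0 (1 + 'X_k) = 1.
Proof. by rewrite rmorphD rmorph1 msubst0X eqxx addr0. Qed.

End VariableElimination.

Arguments univar {n R} k.
Arguments msubst0 {n R} k.

Lemma msubst0_factor (n : nat) (R : idomainType) (k : 'I_n) (d e : {mpoly R[n]}) :
  d * e != 0 -> msubst0 k (d * e) = d * e -> msubst0 k d = d.
Proof.
move=> de_neq0 de_fixed.
have univar_de : univar k d * univar k e = (d * e)%:P.
  by rewrite -rmorphM -[in LHS]de_fixed univar_msubst0 de_fixed.
have /size1_polyC univar_d : (size (univar k d) <= 1)%N.
  have : size (univar k d * univar k e) == 1%N.
    by rewrite univar_de size_polyC de_neq0.
  by rewrite size_mul_eq1 => /andP[/eqP sz _]; apply: eq_leq.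
change ((univar k d).[0] = d).
by rewrite -{2}(univarK k d) univar_d !hornerC.
Qed.

Section Monomials.
Variable n : nat.
Implicit Types m : 'X_{1..n}.

Lemma mnm_neq0_ex m : m != 0%MM -> exists i, m i != 0%N.
Proof.
move=> m_neq0; apply/existsP; apply: contraNT m_neq0 => /existsPn m0.
by apply/eqP/mnmP => i; rewrite mnm0E; apply/eqP/negbNE.
Qed.

Lemma lexlt_asym m1 m2 : lexlt m1 m2 -> ~~ lexlt m2 m1.
Proof.
move=> /existsP[i /andP[lt1 /forallP eq1]]; apply/negP => /existsP[j /andP[lt2 /forallP eq2]].
case: (ltngtP i j) => [ij|ji|/val_inj ij].
- by move: (eq2 i); rewrite ij => /eqP eq_i; rewrite eq_i ltnn in lt1.
- by move: (eq1 j); rewrite ji => /eqP eq_j; rewrite eq_j ltnn in lt2.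
- by subst j; move: (ltn_trans lt1 lt2); rewrite ltnn.
Qed.

Lemma lexlt_addr m m' : m' != 0%MM -> lexlt m (m + m')%MM.
Proof.
case/mnm_neq0_ex=> i0 m'i0.
case: (@arg_minnP _ i0 (fun j => m' j != 0%N) (@nat_of_ord n) m'i0) => i m'i i_min.
apply/existsP; exists i; rewrite mnmDE -{1}[m i]addn0 ltn_add2l lt0n m'i /=.
apply/forallP => j; apply/implyP => ji; rewrite mnmDE.
have [->|m'j] := eqVneq (m' j) 0%N; first by rewrite addn0.
by move: (i_min j m'j); rewrite leqNgt ji.
Qed.

Lemma lexmin_mem m0 s : lexmin m0 s \in m0 :: s.
Proof.
elim: s => [|m s IH] /=; first exact: mem_head.
case: ifP => _; rewrite !inE ?eqxx ?orbT //.
by move: IH; rewrite inE => /orP[]->; rewrite ?orbT.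
Qed.

Lemma lexmin_eq m0 s m :
  m \in m0 :: s -> {in m0 :: s, forall m', m' != m -> lexlt m m'} -> lexmin m0 s = m.
Proof.
elim: s => [|m1 s IH] /= m_in m_min; first by move: m_in; rewrite inE => /eqP.
have sub_s : {subset m0 :: s <= m0 :: m1 :: s}.
  by move=> m'; rewrite !inE => /orP[]->; rewrite ?orbT.
have [m_in_s|m_notin_s] := boolP (m \in m0 :: s).
  rewrite IH //; last by move=> m' /sub_s; apply: m_min.
  case: ifP => // lt_m1; have [//|m1_neq] := eqVneq m1 m.
  by move: (lexlt_asym lt_m1); rewrite m_min // !inE eqxx orbT.
have m1_eq : m1 = m.
  by move: m_in m_notin_s; rewrite !inE => /or3P[->|/eqP->|->] //; rewrite orbT.
subst m1; have min_neq : lexmin m0 s != m.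
  by apply: contraNneq m_notin_s => <-; exact: lexmin_mem.
by rewrite m_min ?min_neq // sub_s ?lexmin_mem.
Qed.

Lemma lexmin_msuppMX (R : nzRingType) (p : {mpoly R[n]}) m :
  p@_0 != 0 ->
  lexmin (head 0%MM (msupp (p * 'X_[m]))) (msupp (p * 'X_[m])) = m.
Proof.
move=> p0_neq0; set s := msupp _.
have m_in : m \in s by rewrite mcoeff_msupp -[m in _@_m]addm0 mcoeffMX.
have hd_in : head 0%MM s \in s by move: m_in; case: (s) => //= ? ? _; exact: mem_head.
have m_min m' : m' \in s -> m' != m -> lexlt m m'.
  rewrite (perm_mem (msuppMX p m)) => /mapP[m'' _ ->] m'_neq.
  by apply: lexlt_addr; apply: contraNneq m'_neq => ->; rewrite addm0.
apply: lexmin_eq => [|m']; first by rewrite inE m_in orbT.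
by rewrite inE => /orP[/eqP->|]; apply: m_min.
Qed.

Lemma meval0_mcoeff0 (R : comNzRingType) (p : {mpoly R[n]}) : p.@[fun _ => 0] = p@_0.
Proof.
have -> : p@_0 = (\sum_(m <- msupp p) p@_m *: 'X_[m])@_0 by rewrite -mpolyE.
rewrite mevalE raddf_sum; apply: eq_bigr => m _ /=; rewrite mcoeffZ mcoeffX; congr (_ * _).
have [->|/mnm_neq0_ex[i mi_neq0]] := eqVneq m 0%MM.
  by rewrite big1 // => i _; rewrite mnm0E expr0.
by rewrite (bigD1 i) //= expr0n (negbTE mi_neq0) mul0r.
Qed.

End Monomials.

Definition mnm_of_set n (S : {set 'I_n}) : 'X_{1..n} := [multinom (i \in S : nat) | i < n].

Section BooleanIdeal.
Variables (n : nat) (R : comNzRingType).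
Notation MP := {mpoly R[n]}.

Definition boolean_ideal (p : MP) : Prop :=
  exists c : 'I_n -> MP, p = \sum_(i < n) c i * ('X_i ^+ 2 - 'X_i).

Lemma boolean_ideal0 : boolean_ideal 0.
Proof. by exists (fun _ => 0); rewrite big1 // => i _; rewrite mul0r. Qed.

Lemma boolean_idealD p q : boolean_ideal p -> boolean_ideal q -> boolean_ideal (p + q).
Proof.
move=> [c ->] [c' ->]; exists (fun i => c i + c' i).
by rewrite -big_split; apply: eq_bigr => i _; rewrite mulrDl.
Qed.

Lemma boolean_idealMl q p : boolean_ideal p -> boolean_ideal (q * p).
Proof.
move=> [c ->]; exists (fun i => q * c i).
by rewrite mulr_sumr; apply: eq_bigr => i _; rewrite mulrA.
Qed.

Lemma boolean_idealMr q p : boolean_ideal p -> boolean_ideal (p * q).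
Proof. by rewrite mulrC; apply: boolean_idealMl. Qed.

Lemma boolean_ideal_idem i : boolean_ideal ('X_i ^+ 2 - 'X_i).
Proof.
exists (fun j => (j == i)%:R); rewrite (bigD1 i) //= eqxx mul1r big1 ?addr0 //.
by move=> j /negbTE ->; rewrite mul0r.
Qed.

Lemma boolean_ideal_prodB (f g : 'I_n -> MP) :
  (forall i, boolean_ideal (f i - g i)) ->
  boolean_ideal (\prod_(i < n) f i - \prod_(i < n) g i).
Proof.
move=> fg; apply: (big_rec2 (fun p q => boolean_ideal (p - q))).
  by rewrite subrr; exact: boolean_ideal0.
move=> i p q _ pq.
have -> : f i * p - g i * q = (f i - g i) * p + g i * (p - q).
  by rewrite mulrBl mulrBr addrA subrK.
by apply: boolean_idealD; [apply: boolean_idealMr | apply: boolean_idealMl].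
Qed.

Lemma mpolyX_mnm_of_set S : 'X_[mnm_of_set S] = \prod_(i < n) 'X_i ^+ (i \in S) :> MP.
Proof. by rewrite mpolyXE_id; apply: eq_bigr => i _; rewrite mnmE. Qed.

(* [Y^(A ∪ B)] and [Y^A Y^B] differ only by [Y_i] versus [Y_i^2] for [i] in [A ∩ B]. *)
Lemma boolean_ideal_mnm_of_setU A B :
  boolean_ideal ('X_[mnm_of_set (A :|: B)] - 'X_[mnm_of_set A] * 'X_[mnm_of_set B]).
Proof.
rewrite !mpolyX_mnm_of_set -big_split /=; apply: boolean_ideal_prodB => i.
rewrite inE; case: (i \in A); case: (i \in B);
  rewrite /= ?expr0 ?expr1 ?mulr1 ?mul1r ?subrr; try exact: boolean_ideal0.
by rewrite -expr2 -opprB -mulN1r; apply: boolean_idealMl; exact: boolean_ideal_idem.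
Qed.

End BooleanIdeal.

Lemma F2_neq0_eq1 (x : F2) : x != 0 -> x = 1.
Proof. by case: x => [[|[|]]] //= ? ?; apply/val_inj. Qed.

Section XiPolynomials.
Variable n : nat.
Notation P := (BPoly n).
Implicit Types (S A B : {set 'I_n}) (k : 'I_n).

Lemma mpolyF2_unit (u : P) : u \is a GRing.unit -> u = 1.
Proof.
move=> u_unit; have /andP[/eqP u_eq u0_unit] : u \in @mpoly_unit n F2 := u_unit.
by rewrite u_eq (F2_neq0_eq1 (x := u@_0)) ?mpolyC1 // -unitfE.
Qed.

Lemma is_gcd_unique (g g' a b : P) : g != 0 -> is_gcd g a b -> is_gcd g' a b -> g' = g.
Proof.
move=> g_neq0 [ga gb g_max] [g'a g'b g'_max].
have [u g'_gu] := g'_max g ga gb; have [v g_g'v] := g_max g' g'a g'b.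
have /(mulfI g_neq0) uv1 : g * (u * v) = g * 1 by rewrite mulr1 mulrA -g'_gu -g_g'v.
by rewrite g'_gu (@mpolyF2_unit u) ?mulr1 //; apply/unitrPr; exists v.
Qed.

Definition xi_quot (S : {set 'I_n}) : P := \prod_(i < n | i \notin S) (1 + 'X_i).

Lemma xiE S : xi S = xi_quot S * 'X_[mnm_of_set S].
Proof.
have F2_char2 : 1 + 1 = 0 :> P by rewrite -mpolyC1 -mpolyCD; congr _%:MP; apply/val_inj.
rewrite mpolyX_mnm_of_set /xi (bigID (mem S)) /= mulrC; congr (_ * _).
  by apply: eq_bigr => i /negbTE iNS; rewrite /phi iNS mpolyC0 addr0.
rewrite [RHS](bigID (mem S)) /= [X in _ = _ * X]big1 ?mulr1 => [|i /negbTE ->]; last first.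
  by rewrite expr0.
by apply: eq_bigr => i iS; rewrite /phi iS /= expr1 mpolyC1 addrAC F2_char2 add0r.
Qed.

Lemma mcoeff0_xi_quot S : (xi_quot S)@_0 = 1.
Proof.
rewrite -meval0_mcoeff0 rmorph_prod big1 // => i _ /=.
by rewrite rmorphD /= mevalXU meval1 addr0.
Qed.

Lemma xi_quot_neq0 S : xi_quot S != 0.
Proof.
by apply: contra_neq (oner_neq0 F2) => xi0; rewrite -(mcoeff0_xi_quot S) xi0 mcoeff0.
Qed.

Lemma TMmon_xi S : TMmon (xi S) = mnm_of_set S.
Proof. by rewrite /TMmon xiE lexmin_msuppMX // mcoeff0_xi_quot oner_neq0. Qed.

Lemma mdivmonMX (p : P) m : mdivmon (p * 'X_[m]) m = p.
Proof.
rewrite /mdivmon (perm_big _ (msuppMX p m)) big_map [RHS]mpolyE.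
by apply: eq_bigr => m' _; rewrite mcoeffMX addmC addmK.
Qed.

Lemma mdivmon_xi S : mdivmon (xi S) (TMmon (xi S)) = xi_quot S.
Proof. by rewrite TMmon_xi xiE mdivmonMX. Qed.

Lemma xi_quotU A B :
  xi_quot A = xi_quot (A :|: B) * \prod_(k <- enum (B :\: A)) (1 + 'X_k).
Proof.
rewrite /xi_quot (bigID (mem B)) /= mulrC; congr (_ * _).
  by apply: eq_bigl => i; rewrite inE negb_or.
by rewrite big_enum; apply: eq_bigl => i; rewrite !inE andbC.
Qed.

Lemma msubst0_xi_quot k S : k \in S -> msubst0 k (xi_quot S) = xi_quot S.
Proof. by move=> kS; apply: msubst0_prod_1X => j _; apply: contraNneq => ->. Qed.

Lemma mdvd_msubst0 k (d f : P) : f != 0 -> msubst0 k f = f -> mdvd d f -> msubst0 k d = d.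
Proof.
by move=> f_neq0 f_fixed [e f_de]; apply: (@msubst0_factor _ _ _ _ e); rewrite -f_de.
Qed.

Lemma mdvd_cancel_1X k (d D : P) :
  msubst0 k d = d -> msubst0 k D = D -> mdvd d (D * (1 + 'X_k)) -> mdvd d D.
Proof.
move=> d_fixed D_fixed [e De]; exists (msubst0 k e).
by move: (congr1 (msubst0 k) De); rewrite !rmorphM msubst0_1X D_fixed d_fixed mulr1.
Qed.

Lemma mdvd_cancel_prod_1X (d D : P) (T : seq 'I_n) : uniq T ->
  {in T, forall k, msubst0 k d = d} -> {in T, forall k, msubst0 k D = D} ->
  mdvd d (D * \prod_(k <- T) (1 + 'X_k)) -> mdvd d D.
Proof.
elim: T D => [|k T IH] D; first by rewrite big_nil mulr1.
case/andP => kNT uT d_fixed D_fixed; rewrite big_cons mulrCA mulrC => dvd.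
have T_sub : {subset T <= k :: T} by move=> j jT; rewrite inE jT orbT.
apply: IH => // [j /T_sub|j /T_sub|]; [exact: d_fixed | exact: D_fixed |].
apply: (mdvd_cancel_1X (k := k)) dvd; first exact/d_fixed/mem_head.
rewrite rmorphM D_fixed ?mem_head // msubst0_prod_1X // => j jT _.
by apply: contraNneq kNT => <-.
Qed.

Lemma is_gcd_xi_quot A B : is_gcd (xi_quot (A :|: B)) (xi_quot A) (xi_quot B).
Proof.
split; first by eexists; apply: xi_quotU.
  by eexists; rewrite setUC; apply: xi_quotU.
move=> d dA dB; apply: (@mdvd_cancel_prod_1X _ _ (enum (B :\: A))).
- exact: enum_uniq.
- move=> k; rewrite mem_enum inE => /andP[_ kB].
  exact: mdvd_msubst0 (xi_quot_neq0 B) (msubst0_xi_quot kB) dB.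
- move=> k; rewrite mem_enum inE => /andP[_ kB].
  by apply: msubst0_xi_quot; rewrite inE kB orbT.
- by rewrite -xi_quotU.
Qed.

End XiPolynomials.

Theorem mainTheorem16 (n : nat) (Q R : {set 'I_n}) :
  let mu := TM (xi Q) * TM (xi R) in
  let a := mdivmon (xi Q) (TMmon (xi Q)) in
  let b := mdivmon (xi R) (TMmon (xi R)) in
  (exists nu, is_gcd nu a b) /\
  (forall nu, is_gcd nu a b -> beq (xi (Q :|: R)) (mu * nu)).
Proof.
rewrite /= !mdivmon_xi; split; first by eexists; apply: is_gcd_xi_quot.
move=> nu /(is_gcd_unique (xi_quot_neq0 _) (is_gcd_xi_quot Q R)) ->.
rewrite /beq /TM !TMmon_xi xiE mulrC -mulrBl.
exact/boolean_idealMr/boolean_ideal_mnm_of_setU.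
Qed.
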